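(* Let $0<x<\pi$. (a) For every $\mu>-1/2$, $|L(x,\mu)|<M\left((2\mu+1)\sin\frac{x}{2}\right)$; equivalently, for every $\lambda>0$, $|\mathrm{L}(x,\lambda)|<M(\lambda\sin x)$. (b) If $\lambda>0$ and $\lambda\sin x>t_0$, then $|\mathrm{L}(x,\lambda)|<\operatorname{arccot}(\lambda\sin x)$. (c) If $\mu>-1/2$ and $(2\mu+1)\sin\frac{x}{2}<1$, then \[ |L(x,\mu)|<\ln\frac{1}{(2\mu+1)\sin\frac{x}{2}}+C_2,\qquad C_2=\ln(1+\sqrt2). \]
   Context: For real $x$ and $\mu>-1$, $L(x,\mu)=\sum_{k=1}^\infty \frac{e^{ikx}}{k+\mu}$ (convergent for $x\notin 2\pi\mathbb{Z}$), and for $\lambda>-1$, $\mathrm{L}(x,\lambda)=e^{-ix}L\left(2x,\frac{\lambda-1}{2}\right)=2\sum_{k=1}^\infty\frac{e^{(2k-1)ix}}{2k+\lambda-1}$. For $t>0$, $M(t)=\int_0^\infty \frac{e^{-tu}}{\sqrt{u^2+1}}\,du$. The constant $t_0$ is defined as $t_0=\inf\{s>0:\ M(t)<\operatorname{arccot} t \text{ for all } t>s\}$ (numerically $t_0\approx 0.7096$, the positive root of $M(t)=\operatorname{arccot}t$). *)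

From Stdlib Require Import Reals.
From Coquelicot Require Import Coquelicot.
Open Scope R_scope.

(* Terms of L(x,mu) = sum_{k>=1} e^{ikx}/(k+mu), indexed from n = 0 (k = n+1),
   split into real and imaginary parts (e^{ikx} = cos(kx) + i sin(kx)). *)
Definition L_re (x mu : R) : R :=
  Series (fun n : nat => cos (INR (S n) * x) / (INR (S n) + mu)).
Definition L_im (x mu : R) : R :=
  Series (fun n : nat => sin (INR (S n) * x) / (INR (S n) + mu)).

Definition L (x mu : R) : C := (L_re x mu, L_im x mu).

Definition cexpi (x : R) : C := (cos x, sin x).

Definition LL (x lam : R) : C := Cmult (cexpi (- x)) (L (2 * x) ((lam - 1) / 2)).

Definition M (t : R) : R :=
  RInt_gen (fun u => exp (- (t * u)) / sqrt (u ^ 2 + 1))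
           (at_point 0) (Rbar_locally p_infty).

Definition arccot (t : R) : R := PI / 2 - atan t.

(* t0 = inf { s > 0 : M(t) < arccot t for all t > s }  (in Rbar; +oo if empty) *)
Definition t0 : Rbar :=
  Glb_Rbar (fun s => 0 < s /\ forall t, s < t -> M t < arccot t).

(** With [c = 2 sin (x/2)], the identity [1/(k+mu) = c * int_0^oo exp (-(k+mu) c u) du] and
    the geometric series in [q = exp (-c u)] write [L(x,mu)] as the integral over [0, +oo) of
    [c exp (-mu c u) q e^{ix} / (1 - q e^{ix})].  Since [|1 - q e^{ix}|^2 = (1-q)^2 + c^2 q],
    the modulus of this integrand is at most [exp (-(mu+1/2) c u) / sqrt (u^2+1)] exactly when
    [c u <= 2 sinh (c u / 2)], with strict inequality for [u > 0]; integrating gives (a), and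
    the second form of (a) is the first one at [2x].  Part (b) is (a) combined with the
    definition of [t0], and (c) follows from [M t <= arcsinh (1/t) <= ln (1/t) + ln (1 + sqrt 2)]
    for [t <= 1]. *)

From Stdlib Require Import Reals Lra Psatz Classical.
From Coquelicot Require Import Coquelicot.
Open Scope R_scope.

(** * Improper integrals over [0, +oo) *)

Definition is_RInt_pinfty (f : R -> R) (l : R) : Prop :=
  is_lim (fun b => RInt f 0 b) p_infty l.

Lemma ex_RInt_continuous_R (f : R -> R) a b :
  (forall u, continuous f u) -> ex_RInt f a b.
Proof. intros Hf. apply (ex_RInt_continuous (V := R_CompleteNormedModule)); auto. Qed.

Lemma ex_derive_continuous_R (f : R -> R) u : ex_derive f u -> continuous f u.
Proof. apply (ex_derive_continuous (K := R_AbsRing) (V := R_NormedModule)). Qed.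

Lemma exp_le_1 a : a <= 0 -> exp a <= 1.
Proof.
intros Ha. rewrite <- exp_0.
destruct (Req_dec a 0) as [-> | Hne]; [lra | left; apply exp_increasing; lra].
Qed.

Lemma continuous_scal_R (f : R -> R) k u :
  continuous f u -> continuous (fun u => k * f u) u.
Proof. apply (continuous_scal_r (V := R_NormedModule)). Qed.

Lemma continuous_exp_neg r u : continuous (fun u => exp (- (r * u))) u.
Proof. apply ex_derive_continuous_R. auto_derive. auto. Qed.

Lemma RInt_exp_neg r a b : r <> 0 ->
  RInt (fun u => exp (- (r * u))) a b = (exp (- (r * a)) - exp (- (r * b))) / r.
Proof.
intros Hr. apply is_RInt_unique.
replace ((exp (- (r * a)) - exp (- (r * b))) / r)
  with (minus (- exp (- (r * b)) / r) (- exp (- (r * a)) / r))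
  by (unfold minus, plus, opp; simpl; field; exact Hr).
apply (is_RInt_derive (fun u => - exp (- (r * u)) / r)).
- intros u _. auto_derive; [auto | field; exact Hr].
- intros u _. apply continuous_exp_neg.
Qed.

Lemma is_lim_p_infty_le (F G : R -> R) (T lf lg : R) :
  (forall b, T <= b -> F b <= G b) ->
  is_lim F p_infty lf -> is_lim G p_infty lg -> lf <= lg.
Proof.
intros HFG HF HG.
apply (is_lim_le_loc F G p_infty lf lg); auto.
exists T. intros b Hb. apply HFG. lra.
Qed.

Lemma is_RInt_pinfty_exp_neg r : 0 < r ->
  is_RInt_pinfty (fun u => exp (- (r * u))) (/ r).
Proof.
intros Hr. unfold is_RInt_pinfty.
apply is_lim_ext with (fun b => / r - / r * exp (- r * b)).
{ intros b. rewrite RInt_exp_neg by lra.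
  rewrite Rmult_0_r, Ropp_0, exp_0, Ropp_mult_distr_l. field. lra. }
replace (/ r) with (/ r - / r * 0) at 1 by ring.
apply (is_lim_minus' _ _ p_infty); [apply is_lim_const |].
apply (is_lim_scal_l _ (/ r) p_infty 0).
apply (is_lim_comp exp (fun b => - r * b) p_infty 0 m_infty).
- apply is_lim_exp_m.
- replace m_infty with (Rbar_mult (- r) p_infty).
  + apply (is_lim_scal_l _ (- r) p_infty p_infty). apply is_lim_id.
  + simpl. destruct (Rle_dec 0 (- r)); [exfalso; lra | reflexivity].
- exists 0. intros; discriminate.
Qed.

Lemma ex_lim_p_infty_incr_bounded (F : R -> R) (B : R) :
  (forall b b', 0 <= b -> b <= b' -> F b <= F b') ->
  (forall b, 0 <= b -> F b <= B) -> exists l : R, is_lim F p_infty l.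
Proof.
intros Hincr Hbnd.
set (E := fun y => exists b, 0 <= b /\ y = F b).
assert (HE : bound E) by (exists B; intros y [b [Hb ->]]; auto).
assert (HE0 : exists y, E y) by (exists (F 0), 0; split; [lra | reflexivity]).
destruct (completeness E HE HE0) as [l [Hub Hlub]].
exists l. apply is_lim_spec. intros eps. simpl.
assert (Happrox : exists b0, 0 <= b0 /\ l - eps < F b0).
{ apply NNPP. intros Hn.
  assert (l <= l - eps).
  { apply Hlub. intros y [b [Hb ->]]. apply Rnot_lt_le. intros Hlt. apply Hn. eauto. }
  destruct eps; simpl in *; lra. }
destruct Happrox as [b0 [Hb0 Hlt]].
exists b0. intros b Hb.
assert (F b0 <= F b) by (apply Hincr; lra).
assert (F b <= l) by (apply Hub; exists b; split; [lra | reflexivity]).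
apply Rabs_def1; lra.
Qed.

Lemma is_RInt_pinfty_minus (f g : R -> R) lf lg :
  (forall u, continuous f u) -> (forall u, continuous g u) ->
  is_RInt_pinfty f lf -> is_RInt_pinfty g lg ->
  is_RInt_pinfty (fun u => f u - g u) (lf - lg).
Proof.
intros Hf Hg Hlf Hlg. unfold is_RInt_pinfty.
apply is_lim_ext with (fun b => RInt f 0 b - RInt g 0 b).
- intros b. symmetry. apply (RInt_minus f g); apply ex_RInt_continuous_R; auto.
- apply (is_lim_minus' _ _ p_infty); auto.
Qed.

Lemma is_RInt_pinfty_plus (f g : R -> R) lf lg :
  (forall u, continuous f u) -> (forall u, continuous g u) ->
  is_RInt_pinfty f lf -> is_RInt_pinfty g lg ->
  is_RInt_pinfty (fun u => f u + g u) (lf + lg).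
Proof.
intros Hf Hg Hlf Hlg. unfold is_RInt_pinfty.
apply is_lim_ext with (fun b => RInt f 0 b + RInt g 0 b).
- intros b. symmetry. apply (RInt_plus f g); apply ex_RInt_continuous_R; auto.
- apply (is_lim_plus' _ _ p_infty); auto.
Qed.

Lemma is_RInt_pinfty_scal (f : R -> R) k l :
  (forall u, continuous f u) -> is_RInt_pinfty f l ->
  is_RInt_pinfty (fun u => k * f u) (k * l).
Proof.
intros Hf Hl. unfold is_RInt_pinfty.
apply is_lim_ext with (fun b => k * RInt f 0 b).
- intros b. symmetry. apply (RInt_scal f). apply ex_RInt_continuous_R; auto.
- apply (is_lim_scal_l _ k p_infty l); auto.
Qed.

Lemma is_RInt_pinfty_ext (f g : R -> R) l :
  (forall u, f u = g u) -> is_RInt_pinfty f l -> is_RInt_pinfty g l.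
Proof.
intros Hfg Hf. apply is_lim_ext with (fun b => RInt f 0 b); auto.
intros b. apply RInt_ext. intros u _. apply Hfg.
Qed.

Lemma is_lim_seq_of_abs_le_inv (u : nat -> R) l K a : 0 < a ->
  (forall n, Rabs (u n - l) <= K / (INR n + a)) -> is_lim_seq u l.
Proof.
intros Ha Hu.
assert (Hinv : is_lim_seq (fun n => K / (INR n + a)) 0).
{ replace (Finite 0) with (Rbar_mult K (Rbar_inv p_infty)) by (simpl; f_equal; ring).
  apply (is_lim_seq_scal_l _ K (Rbar_inv p_infty)).
  apply is_lim_seq_inv; [| discriminate].
  apply (is_lim_seq_plus _ _ p_infty a); [apply is_lim_seq_INR | apply is_lim_seq_const |].
  constructor. }
apply is_lim_seq_le_le with (fun n => l - K / (INR n + a)) (fun n => l + K / (INR n + a)).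
- intros n. specialize (Hu n). apply Rabs_le_between in Hu. lra.
- replace (Finite l) with (Finite (l - 0)) by (f_equal; ring).
  apply (is_lim_seq_minus' _ _ l 0); [apply is_lim_seq_const | exact Hinv].
- replace (Finite l) with (Finite (l + 0)) by (f_equal; ring).
  apply (is_lim_seq_plus' _ _ l 0); [apply is_lim_seq_const | exact Hinv].
Qed.

Lemma RInt_exp_neg_le r b : 0 < r -> 0 <= b ->
  RInt (fun u => exp (- (r * u))) 0 b <= / r.
Proof.
intros Hr Hb. rewrite RInt_exp_neg by lra.
rewrite Rmult_0_r, Ropp_0, exp_0.
generalize (exp_pos (- (r * b))). intros.
apply Rmult_le_reg_l with r; [lra |]. field_simplify; lra.
Qed.

Lemma RInt_le_exp_neg (f : R -> R) K r b :
  (forall u, continuous f u) -> 0 < r -> 0 <= b ->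
  (forall u, 0 <= u -> f u <= K * exp (- (r * u))) -> 0 <= K ->
  RInt f 0 b <= K / r.
Proof.
intros Hf Hr Hb Hdom HK.
assert (He : forall u, continuous (fun u => exp (- (r * u))) u)
  by (intros; apply continuous_exp_neg).
apply Rle_trans with (RInt (fun u => K * exp (- (r * u))) 0 b).
- apply RInt_le; [lra | apply ex_RInt_continuous_R; auto | |].
  + apply ex_RInt_continuous_R. intros u. apply continuous_scal_R, He.
  + intros u Hu. apply Hdom. lra.
- rewrite (RInt_scal (fun u => exp (- (r * u)))) by (apply ex_RInt_continuous_R; auto).
  apply Rmult_le_compat_l; auto. apply RInt_exp_neg_le; auto.
Qed.

Lemma ex_RInt_pinfty_exp_dominated (f : R -> R) K r :
  (forall u, continuous f u) -> 0 < r ->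
  (forall u, 0 <= u -> Rabs (f u) <= K * exp (- (r * u))) ->
  exists l : R, is_RInt_pinfty f l.
Proof.
intros Hf Hr Hdom.
assert (HK : 0 <= K).
{ specialize (Hdom 0 ltac:(lra)). rewrite Rmult_0_r, Ropp_0, exp_0 in Hdom.
  generalize (Rabs_pos (f 0)). lra. }
set (e := fun u => exp (- (r * u))).
assert (He : forall u, continuous e u) by (intros; apply continuous_exp_neg).
set (g := fun u => f u + K * e u).
assert (Hg : forall u, continuous g u).
{ intros u. apply (continuous_plus (V := R_NormedModule)); auto.
  apply continuous_scal_R, He. }
assert (Hg_bounds : forall u, 0 <= u -> 0 <= g u <= 2 * K * e u).
{ intros u Hu. specialize (Hdom u Hu). apply Rabs_le_between in Hdom. unfold g, e. lra. }
destruct (ex_lim_p_infty_incr_bounded (fun b => RInt g 0 b) (2 * K / r)) as [l Hl].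
- intros b b' Hb Hbb'.
  rewrite <- (RInt_Chasles g 0 b b') by (apply ex_RInt_continuous_R; auto).
  assert (0 <= RInt g b b').
  { apply RInt_ge_0; [lra | apply ex_RInt_continuous_R; auto |].
    intros u Hu. apply Hg_bounds. lra. }
  simpl. unfold plus; simpl. lra.
- intros b Hb. apply RInt_le_exp_neg; auto; [| lra].
  intros u Hu. apply Hg_bounds; auto.
- exists (l - K * / r).
  apply is_lim_ext with (fun b => RInt g 0 b - RInt (fun u => K * e u) 0 b).
  + intros b. rewrite <- (RInt_minus g) by (apply ex_RInt_continuous_R; auto;
      intros u; apply continuous_scal_R, He).
    apply RInt_ext. intros u _. unfold g, minus, plus, opp. simpl. ring.
  + apply (is_lim_minus' _ _ p_infty); auto.
    apply (is_RInt_pinfty_scal e K (/ r) He). apply is_RInt_pinfty_exp_neg; auto.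
Qed.

Lemma is_RInt_pinfty_abs_le (f : R -> R) K r l :
  (forall u, continuous f u) -> 0 < r ->
  (forall u, 0 <= u -> Rabs (f u) <= K * exp (- (r * u))) ->
  is_RInt_pinfty f l -> Rabs l <= K / r.
Proof.
intros Hf Hr Hdom Hl.
assert (HK : 0 <= K).
{ specialize (Hdom 0 ltac:(lra)). rewrite Rmult_0_r, Ropp_0, exp_0 in Hdom.
  generalize (Rabs_pos (f 0)). lra. }
apply (is_lim_p_infty_le (fun b => Rabs (RInt f 0 b)) (fun _ => K / r) 0).
- intros b Hb. eapply Rle_trans; [apply abs_RInt_le; auto; apply ex_RInt_continuous_R; auto |].
  apply RInt_le_exp_neg; auto.
  intros u. apply continuous_Rabs_comp. auto.
- apply (is_lim_Rabs _ p_infty l Hl).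
- apply is_lim_const.
Qed.

Lemma is_RInt_pinfty_gt0 (f : R -> R) l :
  (forall u, continuous f u) -> (forall u, 0 <= u -> 0 <= f u) ->
  (forall u, 0 < u -> 0 < f u) -> is_RInt_pinfty f l -> 0 < l.
Proof.
intros Hf Hnneg Hpos Hl.
assert (H01 : 0 < RInt f 0 1).
{ replace 0 with (RInt (fun _ => 0) 0 1) at 1
    by (rewrite RInt_const; unfold scal; simpl; unfold mult; simpl; ring).
  apply RInt_lt; [lra | auto | intros; apply continuous_const |].
  intros u Hu. apply Hpos. lra. }
enough (RInt f 0 1 <= l) by lra.
apply (is_lim_p_infty_le (fun _ => RInt f 0 1) (fun b => RInt f 0 b) 1); auto.
- intros b Hb. rewrite <- (RInt_Chasles f 0 1 b) by (apply ex_RInt_continuous_R; auto).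
  assert (0 <= RInt f 1 b).
  { apply RInt_ge_0; [lra | apply ex_RInt_continuous_R; auto |].
    intros u Hu. apply Hnneg. lra. }
  simpl. unfold plus; simpl. lra.
- apply is_lim_const.
Qed.

Lemma is_RInt_pinfty_lt (f g : R -> R) lf lg :
  (forall u, continuous f u) -> (forall u, continuous g u) ->
  is_RInt_pinfty f lf -> is_RInt_pinfty g lg ->
  (forall u, 0 <= u -> f u <= g u) -> (forall u, 0 < u -> f u < g u) -> lf < lg.
Proof.
intros Hf Hg Hlf Hlg Hle Hlt.
enough (0 < lg - lf) by lra.
apply (is_RInt_pinfty_gt0 (fun u => g u - f u)).
- intros u. apply (continuous_minus (V := R_NormedModule)); auto.
- intros u Hu. specialize (Hle u Hu). lra.
- intros u Hu. specialize (Hlt u Hu). lra.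
- apply is_RInt_pinfty_minus; auto.
Qed.

Lemma RInt_gen_is_RInt_pinfty (f : R -> R) l :
  (forall u, continuous f u) -> is_RInt_pinfty f l ->
  RInt_gen f (at_point 0) (Rbar_locally p_infty) = l.
Proof.
intros Hf Hl. apply is_RInt_gen_unique.
intros P HP.
apply Filter_prod with (fun a => a = 0) (fun b => P (RInt f 0 b)).
- reflexivity.
- exact (Hl P HP).
- intros a b -> Hb. exists (RInt f 0 b). split; auto.
  apply RInt_correct. apply ex_RInt_continuous_R; auto.
Qed.

Lemma dot_le_norm_mul a1 a2 b1 b2 h :
  0 <= h -> b1 ^ 2 + b2 ^ 2 <= h ^ 2 ->
  a1 * b1 + a2 * b2 <= sqrt (a1 ^ 2 + a2 ^ 2) * h.
Proof.
intros Hh Hb.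
set (N := sqrt (a1 ^ 2 + a2 ^ 2)).
assert (HN0 : 0 <= N) by apply sqrt_pos.
assert (HN2 : N * N = a1 ^ 2 + a2 ^ 2) by (apply sqrt_sqrt; nra).
assert (HCS : (a1 * b1 + a2 * b2) ^ 2 <= (N * h) ^ 2).
{ assert (0 <= (a1 * b2 - a2 * b1) ^ 2) by apply pow2_ge_0.
  assert (0 <= N * N) by nra. nra. }
assert (0 <= N * h) by nra. nra.
Qed.

Lemma dot_lt_norm_mul a1 a2 b1 b2 h :
  0 < a1 ^ 2 + a2 ^ 2 -> 0 <= h -> b1 ^ 2 + b2 ^ 2 < h ^ 2 ->
  a1 * b1 + a2 * b2 < sqrt (a1 ^ 2 + a2 ^ 2) * h.
Proof.
intros Ha Hh Hb.
set (N := sqrt (a1 ^ 2 + a2 ^ 2)).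
assert (HN0 : 0 <= N) by apply sqrt_pos.
assert (HN2 : N * N = a1 ^ 2 + a2 ^ 2) by (apply sqrt_sqrt; nra).
assert (HCS : (a1 * b1 + a2 * b2) ^ 2 < (N * h) ^ 2).
{ assert (0 <= (a1 * b2 - a2 * b1) ^ 2) by apply pow2_ge_0. nra. }
assert (0 <= N * h) by nra. nra.
Qed.

Lemma Cmod_is_RInt_pinfty_lt (f1 f2 h : R -> R) I1 I2 Ih :
  (forall u, continuous f1 u) -> (forall u, continuous f2 u) ->
  (forall u, continuous h u) ->
  is_RInt_pinfty f1 I1 -> is_RInt_pinfty f2 I2 -> is_RInt_pinfty h Ih ->
  (forall u, 0 <= u -> 0 <= h u) ->
  (forall u, 0 <= u -> f1 u ^ 2 + f2 u ^ 2 <= h u ^ 2) ->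
  (forall u, 0 < u -> f1 u ^ 2 + f2 u ^ 2 < h u ^ 2) ->
  Cmod (I1, I2) < Ih.
Proof.
intros Hf1 Hf2 Hh HI1 HI2 HIh Hh0 Hle Hlt.
unfold Cmod; simpl fst; simpl snd.
set (N := sqrt (I1 ^ 2 + I2 ^ 2)).
assert (HN2 : N * N = I1 ^ 2 + I2 ^ 2) by (apply sqrt_sqrt; nra).
assert (Hsq := pow2_ge_0 I1). assert (Hsq' := pow2_ge_0 I2).
destruct (Req_dec (I1 ^ 2 + I2 ^ 2) 0) as [Hzero | Hnz].
- replace N with 0 by (unfold N; rewrite Hzero; symmetry; apply sqrt_0).
  apply (is_RInt_pinfty_gt0 h); auto.
  intros u Hu. specialize (Hlt u Hu). specialize (Hh0 u ltac:(lra)).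
  generalize (pow2_ge_0 (f1 u)) (pow2_ge_0 (f2 u)). nra.
- assert (HN : 0 < N) by (apply sqrt_lt_R0; lra).
  assert (I1 * I1 + I2 * I2 < N * Ih).
  { apply (is_RInt_pinfty_lt (fun u => I1 * f1 u + I2 * f2 u) (fun u => N * h u)); auto.
    - intros u. apply (continuous_plus (V := R_NormedModule)); apply continuous_scal_R; auto.
    - intros u. apply continuous_scal_R; auto.
    - apply is_RInt_pinfty_plus; auto using is_RInt_pinfty_scal, continuous_scal_R.
    - apply is_RInt_pinfty_scal; auto.
    - intros u Hu. apply dot_le_norm_mul; auto.
    - intros u Hu. apply dot_lt_norm_mul; [lra | apply Hh0; lra | auto]. }
  nra.
Qed.

(** * The integral M *)

Definition M_integrand (t u : R) : R := exp (- (t * u)) / sqrt (u ^ 2 + 1).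

Lemma sqrt_sq_add1_pos u : 0 < sqrt (u ^ 2 + 1).
Proof. apply sqrt_lt_R0. generalize (pow2_ge_0 u). lra. Qed.

Lemma continuous_M_integrand t u : continuous (M_integrand t) u.
Proof.
apply ex_derive_continuous_R. unfold M_integrand. auto_derive.
assert (H := sqrt_sq_add1_pos u). assert (H2 := pow2_ge_0 u). simpl in *.
split; [lra | split; [apply Rgt_not_eq; lra | exact I]].
Qed.

Lemma M_integrand_pos t u : 0 < M_integrand t u.
Proof. apply Rdiv_lt_0_compat; [apply exp_pos | apply sqrt_sq_add1_pos]. Qed.

Lemma M_integrand_le t u : M_integrand t u <= exp (- (t * u)).
Proof.
unfold M_integrand.
assert (1 <= sqrt (u ^ 2 + 1)).
{ rewrite <- sqrt_1 at 1. apply sqrt_le_1_alt. generalize (pow2_ge_0 u). lra. }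
apply Rmult_le_reg_r with (sqrt (u ^ 2 + 1)); [lra |].
field_simplify; [| lra]. generalize (exp_pos (- (t * u))). nra.
Qed.

Lemma is_RInt_pinfty_M t : 0 < t -> is_RInt_pinfty (M_integrand t) (M t).
Proof.
intros Ht.
assert (Hc : forall u, continuous (M_integrand t) u) by apply continuous_M_integrand.
destruct (ex_RInt_pinfty_exp_dominated (M_integrand t) 1 t) as [l Hl]; auto.
- intros u _. rewrite Rabs_pos_eq, Rmult_1_l by (left; apply M_integrand_pos).
  apply M_integrand_le.
- unfold M. fold (M_integrand t). rewrite (RInt_gen_is_RInt_pinfty _ l); auto.
Qed.

Lemma inv_sqrt_sq_add1_le a b : 0 <= a <= b -> / sqrt (b ^ 2 + 1) <= / sqrt (a ^ 2 + 1).
Proof.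
intros Hab. apply Rinv_le_contravar; [apply sqrt_sq_add1_pos |].
apply sqrt_le_1_alt. assert (a ^ 2 <= b ^ 2) by (apply pow_incr; lra). lra.
Qed.

Definition head_majorant (t w u : R) : R := / sqrt (u ^ 2 + 1) - w + w * exp (- (t * u)).

Lemma continuous_head_majorant t w u : continuous (head_majorant t w) u.
Proof.
apply ex_derive_continuous_R. unfold head_majorant. auto_derive.
assert (H := sqrt_sq_add1_pos u). assert (H2 := pow2_ge_0 u). simpl in *.
split; [lra | split; [apply Rgt_not_eq; lra | exact I]].
Qed.

Lemma RInt_head_majorant t w T : 0 < t ->
  RInt (head_majorant t w) 0 T = arcsinh T - w * T + w * (1 - exp (- (t * T))) / t.
Proof.
intros Ht. apply is_RInt_unique.
set (F := fun u => arcsinh u - w * u - w * exp (- (t * u)) / t).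
replace (arcsinh T - w * T + w * (1 - exp (- (t * T))) / t) with (minus (F T) (F 0)).
2:{ unfold minus, plus, opp, F; simpl. rewrite arcsinh_0, !Rmult_0_r, Ropp_0, exp_0.
    field. lra. }
apply (is_RInt_derive F); [| intros; apply continuous_head_majorant].
intros u _. unfold F, head_majorant.
assert (Ha : is_derive arcsinh u (/ sqrt (u ^ 2 + 1)))
  by apply is_derive_Reals, derivable_pt_lim_arcsinh.
auto_derive; [eexists; exact Ha |].
replace (Derive (fun y => arcsinh y) u) with (/ sqrt (u ^ 2 + 1))
  by (symmetry; apply is_derive_unique; exact Ha).
field. split; [apply Rgt_not_eq, sqrt_sq_add1_pos | lra].
Qed.

(* The difference is [(1 - exp (- (t * u))) * (/ sqrt (u ^ 2 + 1) - / sqrt (T ^ 2 + 1))]. *)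
Lemma M_integrand_le_head_majorant t T u : 0 <= t -> 0 <= u <= T ->
  M_integrand t u <= head_majorant t (/ sqrt (T ^ 2 + 1)) u.
Proof.
intros Ht Hu. unfold M_integrand, head_majorant, Rdiv.
assert (Hv : / sqrt (T ^ 2 + 1) <= / sqrt (u ^ 2 + 1)) by (apply inv_sqrt_sq_add1_le; lra).
assert (He : exp (- (t * u)) <= 1) by (apply exp_le_1; nra).
nra.
Qed.

Lemma M_integrand_le_tail t T u : 0 <= T <= u ->
  M_integrand t u <= / sqrt (T ^ 2 + 1) * exp (- (t * u)).
Proof.
intros Hu. unfold M_integrand, Rdiv.
assert (Hv : / sqrt (u ^ 2 + 1) <= / sqrt (T ^ 2 + 1)) by (apply inv_sqrt_sq_add1_le; lra).
generalize (exp_pos (- (t * u))). nra.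
Qed.

Lemma M_le_arcsinh_inv t : 0 < t -> M t <= arcsinh (/ t).
Proof.
intros Ht.
set (T := / t). set (w := / sqrt (T ^ 2 + 1)).
assert (HT : 0 < T) by (apply Rinv_0_lt_compat; lra).
assert (Hw : 0 < w) by (apply Rinv_0_lt_compat, sqrt_sq_add1_pos).
assert (Hint : forall a b, ex_RInt (M_integrand t) a b)
  by (intros; apply ex_RInt_continuous_R, continuous_M_integrand).
assert (Hhead : RInt (M_integrand t) 0 T <= arcsinh T - w * T + w * (1 - exp (- (t * T))) / t).
{ rewrite <- RInt_head_majorant by exact Ht.
  apply RInt_le; [lra | auto | apply ex_RInt_continuous_R, continuous_head_majorant |].
  intros u Hu. apply M_integrand_le_head_majorant; lra. }
assert (Htail : forall b, T <= b ->
          RInt (M_integrand t) T b <= w * (exp (- (t * T)) - exp (- (t * b))) / t).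
{ intros b Hb.
  replace (w * (exp (- (t * T)) - exp (- (t * b))) / t)
    with (w * RInt (fun u => exp (- (t * u))) T b)
    by (rewrite RInt_exp_neg by lra; field; lra).
  rewrite <- (RInt_scal (fun u => exp (- (t * u))))
    by (apply ex_RInt_continuous_R; intros; apply continuous_exp_neg).
  apply RInt_le; [lra | auto | |].
  - apply ex_RInt_continuous_R. intros u. apply continuous_scal_R, continuous_exp_neg.
  - intros u Hu. apply M_integrand_le_tail. lra. }
apply (is_lim_p_infty_le (fun b => RInt (M_integrand t) 0 b) (fun _ => arcsinh T) T).
- intros b Hb. rewrite <- (RInt_Chasles _ 0 T b) by auto.
  specialize (Htail b Hb). simpl. unfold plus; simpl.
  assert (HwT : w * T = w / t) by (unfold T; field; lra).
  assert (0 < w * exp (- (t * b)) / t)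
    by (apply Rdiv_lt_0_compat; [apply Rmult_lt_0_compat; [lra | apply exp_pos] | lra]).
  assert (w * (1 - exp (- (t * T))) / t + w * (exp (- (t * T)) - exp (- (t * b))) / t
          = w / t - w * exp (- (t * b)) / t) by (field; lra).
  lra.
- apply is_RInt_pinfty_M; auto.
- apply is_lim_const.
Qed.

Lemma arcsinh_le_ln T : 1 <= T -> arcsinh T <= ln T + ln (1 + sqrt 2).
Proof.
intros HT. unfold arcsinh.
assert (H2 : 0 <= sqrt 2) by apply sqrt_pos.
rewrite <- ln_mult by lra.
apply ln_le; [generalize (sqrt_sq_add1_pos T); lra |].
assert (sqrt (T ^ 2 + 1) <= sqrt 2 * T).
{ rewrite <- (sqrt_pow2 T) at 2 by lra. rewrite <- sqrt_mult_alt by lra.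
  apply sqrt_le_1_alt. nra. }
lra.
Qed.

Lemma M_le_ln t : 0 < t <= 1 -> M t <= ln (1 / t) + ln (1 + sqrt 2).
Proof.
intros Ht. unfold Rdiv. rewrite Rmult_1_l.
apply Rle_trans with (arcsinh (/ t)); [apply M_le_arcsinh_inv; lra |].
apply arcsinh_le_ln. rewrite <- Rinv_1. apply Rinv_le_contravar; lra.
Qed.

Lemma M_lt_arccot (t : R) : Rbar_lt t0 t -> M t < arccot t.
Proof.
intros Ht.
set (E := fun s => 0 < s /\ forall t, s < t -> M t < arccot t).
destruct (classic (exists s, E s /\ s < t)) as [[s [[_ Hs] Hst]] | Hnone]; [auto |].
exfalso.
assert (Hlb : is_lb_Rbar E t).
{ intros s Hs. simpl. apply Rnot_lt_le. intros Hst. apply Hnone. eauto. }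
apply (Rbar_lt_not_le _ _ Ht). exact (proj2 (Glb_Rbar_correct E) t Hlb).
Qed.

(** * Laplace representation of L *)

Lemma lt_sinh y : 0 < y -> y < sinh y.
Proof.
intros Hy.
assert (Htaylor : 1 + y + y ^ 2 / 2 + y ^ 3 / 6 <= exp y)
  by (generalize (exp_ge_taylor y 3 ltac:(lra)); simpl; lra).
set (E := exp y) in *.
assert (HE : 0 < E) by apply exp_pos.
assert (Hsq : 2 * y * E < E * E - 1).
{ assert (Hgap : 1 + y ^ 2 / 2 <= E - y) by (assert (0 < y ^ 3) by (apply pow_lt; lra); lra).
  assert (0 < y ^ 4) by (apply pow_lt; lra).
  assert ((1 + y ^ 2 / 2) ^ 2 <= (E - y) ^ 2) by (apply pow_incr; nra).
  nra. }
unfold sinh. rewrite exp_Ropp. fold E.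
apply Rmult_lt_reg_r with (2 * E); [lra |].
replace ((E - / E) / 2 * (2 * E)) with (E * E - 1) by (field; lra).
lra.
Qed.

Lemma sq_mul_exp_neg_lt r : 0 < r -> r ^ 2 * exp (- r) < (1 - exp (- r)) ^ 2.
Proof.
intros Hr.
set (y := r / 2). set (p := exp (- y)).
assert (Hp : 0 < p) by apply exp_pos.
assert (Hpp : exp (- r) = p * p) by (unfold p; rewrite <- exp_plus; f_equal; unfold y; field).
assert (Hdiff : 1 - exp (- r) = 2 * p * sinh y).
{ rewrite Hpp. unfold sinh. fold p.
  replace (exp y) with (/ p) by (unfold p; rewrite exp_Ropp, Rinv_inv; reflexivity).
  field. lra. }
rewrite Hdiff, Hpp.
assert (Hs : y < sinh y) by (apply lt_sinh; unfold y; lra).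
replace r with (2 * y) by (unfold y; field).
assert (0 < y) by (unfold y; lra).
assert (Hyp : y * p < sinh y * p) by (apply Rmult_lt_compat_r; lra).
assert (0 < y * p) by nra.
nra.
Qed.

Section LaplaceRepresentation.

Variables x c mu : R.
Hypothesis c_pos : 0 < c.
Hypothesis cos_x : cos x = 1 - c ^ 2 / 2.

Definition damp (u : R) : R := exp (- (c * u)).

Definition denom (u : R) : R := 1 - 2 * damp u * cos x + damp u ^ 2.

(* [kernel cos] and [kernel sin] are the real and imaginary parts of
   [c exp (- (mu c u)) q e^{ix} / (1 - q e^{ix})] with [q = damp u]; [tail g K] is what
   remains of it after the first [K] terms of the geometric series. *)
Definition kernel (g : R -> R) (u : R) : R :=
  c * exp (- (mu * c * u)) * (damp u * g x - damp u ^ 2 * g 0) / denom u.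

Definition tail (g : R -> R) (K : nat) (u : R) : R :=
  c * exp (- (mu * c * u)) * damp u ^ S K
    * (g (INR (S K) * x) - damp u * g (INR K * x)) / denom u.

Definition term (g : R -> R) (K : nat) (u : R) : R :=
  c * g (INR (S K) * x) * exp (- ((INR (S K) + mu) * c * u)).

Lemma damp_pos u : 0 < damp u.
Proof. apply exp_pos. Qed.

Lemma damp_le_1 u : 0 <= u -> damp u <= 1.
Proof. intros Hu. apply exp_le_1. nra. Qed.

Lemma denom_eq u : denom u = (1 - damp u) ^ 2 + c ^ 2 * damp u.
Proof. unfold denom. rewrite cos_x. field. Qed.

Lemma denom_pos u : 0 < denom u.
Proof.
rewrite denom_eq.
assert (0 < c ^ 2 * damp u) by (apply Rmult_lt_0_compat; [apply pow_lt; lra | apply damp_pos]).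
generalize (pow2_ge_0 (1 - damp u)). lra.
Qed.

Lemma denom_ge u : 0 <= u -> c ^ 2 / 4 <= denom u.
Proof.
intros Hu. rewrite denom_eq.
assert (Hc2 : c ^ 2 <= 4) by (generalize (COS_bound x); lra).
generalize (damp_pos u) (damp_le_1 u Hu) (pow2_ge_0 (1 - damp u)). intros.
assert (c ^ 2 / 4 * (1 - damp u) ^ 2 <= (1 - damp u) ^ 2) by nra.
nra.
Qed.

Lemma exp_mul_damp_pow k u :
  exp (- (mu * c * u)) * damp u ^ k = exp (- ((INR k + mu) * c * u)).
Proof.
unfold damp. induction k as [| k IH].
- simpl. rewrite Rmult_1_r. f_equal. ring.
- rewrite S_INR, <- tech_pow_Rmult, Rmult_comm, Rmult_assoc, (Rmult_comm _ (exp _)), IH.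
  rewrite <- exp_plus. f_equal. ring.
Qed.

Lemma tail_0 g u : tail g 0 u = kernel g u.
Proof.
unfold tail, kernel. simpl. rewrite Rmult_0_l, !Rmult_1_l.
field. apply Rgt_not_eq, denom_pos.
Qed.

Lemma continuous_kernel g u : continuous (kernel g) u.
Proof.
apply ex_derive_continuous_R. generalize (denom_pos u).
unfold kernel, denom, damp. intros. auto_derive. lra.
Qed.

Lemma continuous_tail g K u : continuous (tail g K) u.
Proof.
apply ex_derive_continuous_R. generalize (denom_pos u).
unfold tail, denom, damp. intros. auto_derive. lra.
Qed.

Lemma continuous_term g K u : continuous (term g K) u.
Proof. apply ex_derive_continuous_R. unfold term. auto_derive. auto. Qed.

Section Series.

Variable g : R -> R.
Hypothesis g_add : forall a b, g (a + b) + g (a - b) = 2 * cos b * g a.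
Hypothesis g_bound : forall y, Rabs (g y) <= 1.
Hypothesis mu_gt : -1 < mu.

Lemma tail_S K u : tail g K u = term g K u + tail g (S K) u.
Proof.
assert (Hrec : g (INR (S (S K)) * x) = 2 * cos x * g (INR (S K) * x) - g (INR K * x)).
{ rewrite <- g_add. replace (INR (S (S K)) * x) with (INR (S K) * x + x) by (rewrite !S_INR; ring).
  replace (INR (S K) * x - x) with (INR K * x) by (rewrite S_INR; ring). ring. }
unfold tail, term. rewrite Hrec, <- exp_mul_damp_pow.
generalize (denom_pos u). unfold denom. intros. simpl pow. field. lra.
Qed.

Lemma tail_abs_le K u : 0 <= u ->
  Rabs (tail g K u) <= 8 / c * exp (- ((INR (S K) + mu) * c * u)).
Proof.
intros Hu. rewrite <- exp_mul_damp_pow.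
assert (HD := denom_ge u Hu). assert (HD0 := denom_pos u).
assert (Hq0 := damp_pos u). assert (Hq1 := damp_le_1 u Hu).
set (P := exp (- (mu * c * u)) * damp u ^ S K).
assert (HP : 0 < P) by (apply Rmult_lt_0_compat; [apply exp_pos | apply pow_lt; lra]).
assert (Hg2 : Rabs (g (INR (S K) * x) - damp u * g (INR K * x)) <= 2).
{ eapply Rle_trans; [apply Rabs_triang |].
  rewrite Rabs_Ropp, Rabs_mult, (Rabs_pos_eq (damp u)) by lra.
  generalize (g_bound (INR (S K) * x)) (g_bound (INR K * x)). nra. }
replace (tail g K u) with (c * P * (g (INR (S K) * x) - damp u * g (INR K * x)) / denom u)
  by (unfold tail, P; field; apply Rgt_not_eq, denom_pos).
unfold Rdiv. rewrite !Rabs_mult, Rabs_inv, (Rabs_pos_eq c), (Rabs_pos_eq P), (Rabs_pos_eq (denom u))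
  by lra.
assert (Hinv : / denom u <= 4 / c ^ 2).
{ replace (4 / c ^ 2) with (/ (c ^ 2 / 4)) by (field; lra).
  apply Rinv_le_contravar; [nra | lra]. }
assert (0 <= Rabs (g (INR (S K) * x) - damp u * g (INR K * x))) by apply Rabs_pos.
assert (0 < / denom u) by (apply Rinv_0_lt_compat; lra).
apply Rle_trans with (c * P * 2 * (4 / c ^ 2)).
- assert (HcP : 0 < c * P) by (apply Rmult_lt_0_compat; lra).
  apply Rmult_le_compat; [apply Rmult_le_pos; lra | lra | | lra].
  apply Rmult_le_compat_l; lra.
- apply Req_le. field. lra.
Qed.

Lemma is_RInt_pinfty_term K :
  is_RInt_pinfty (term g K) (g (INR (S K) * x) / (INR (S K) + mu)).
Proof.
assert (Hk : 0 < INR (S K) + mu) by (rewrite S_INR; generalize (pos_INR K); lra).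
replace (g (INR (S K) * x) / (INR (S K) + mu))
  with (c * g (INR (S K) * x) * / ((INR (S K) + mu) * c)) by (field; lra).
apply (is_RInt_pinfty_scal (fun u => exp (- ((INR (S K) + mu) * c * u))));
  [intros; apply continuous_exp_neg |].
apply is_RInt_pinfty_exp_neg. nra.
Qed.

Lemma is_RInt_pinfty_kernel :
  is_RInt_pinfty (kernel g) (Series (fun n => g (INR (S n) * x) / (INR (S n) + mu))).
Proof.
set (a := fun n => g (INR (S n) * x) / (INR (S n) + mu)).
destruct (ex_RInt_pinfty_exp_dominated (kernel g) (8 / c) ((INR 1 + mu) * c)) as [I HI].
- apply continuous_kernel.
- simpl. nra.
- intros u Hu. rewrite <- tail_0. apply tail_abs_le; auto.
assert (Hstep : forall K l, is_RInt_pinfty (tail g K) l ->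
          is_RInt_pinfty (tail g (S K)) (l - a K)).
{ intros K l Hl.
  apply is_RInt_pinfty_ext with (fun u => tail g K u - term g K u).
  - intros u. rewrite (tail_S K u). ring.
  - apply is_RInt_pinfty_minus; auto using continuous_tail, continuous_term, is_RInt_pinfty_term. }
assert (Htail : forall N, is_RInt_pinfty (tail g (S N)) (I - sum_n a N)).
{ induction N as [| N IH].
  - rewrite sum_O. apply Hstep. apply is_RInt_pinfty_ext with (kernel g); auto.
    intros u. symmetry. apply tail_0.
  - rewrite sum_Sn. replace (I - plus (sum_n a N) (a (S N))) with (I - sum_n a N - a (S N))
      by (unfold plus; simpl; ring).
    apply Hstep, IH. }
rewrite (is_series_unique a I); auto.
apply (is_lim_seq_of_abs_le_inv _ _ (8 / c ^ 2) (mu + 2)); [lra |].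
intros N. rewrite Rabs_minus_sym.
replace (8 / c ^ 2 / (INR N + (mu + 2))) with (8 / c / ((INR (S (S N)) + mu) * c))
  by (rewrite !S_INR; field; split; [lra | generalize (pos_INR N); lra]).
apply (is_RInt_pinfty_abs_le (tail g (S N))); auto using continuous_tail.
- rewrite !S_INR. generalize (pos_INR N). intros. nra.
- intros u Hu. apply tail_abs_le; auto.
Qed.

End Series.

Lemma M_integrand_sq_sub_kernel_sq u :
  M_integrand ((mu + / 2) * c) u ^ 2 - (kernel cos u ^ 2 + kernel sin u ^ 2) =
  exp (- (mu * c * u)) ^ 2 * damp u * ((1 - damp u) ^ 2 - (c * u) ^ 2 * damp u)
    / (denom u * (u ^ 2 + 1)).
Proof.
assert (HD := denom_pos u). assert (Hu2 := pow2_ge_0 u).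
set (E := exp (- (mu * c * u))).
assert (HM : M_integrand ((mu + / 2) * c) u ^ 2 = E ^ 2 * damp u / (u ^ 2 + 1)).
{ unfold M_integrand, Rdiv. rewrite Rpow_mult_distr, pow_inv, pow2_sqrt by lra.
  f_equal. unfold E, damp. simpl pow. rewrite !Rmult_1_r, <- !exp_plus. f_equal. field. }
assert (Hkernel : kernel cos u ^ 2 + kernel sin u ^ 2 = c ^ 2 * E ^ 2 * damp u ^ 2 / denom u).
{ unfold kernel. fold E. rewrite cos_0, sin_0.
  replace ((c * E * (damp u * sin x - damp u ^ 2 * 0) / denom u) ^ 2)
    with (c ^ 2 * E ^ 2 * damp u ^ 2 * sin x ^ 2 / denom u ^ 2) by (field; lra).
  replace (sin x ^ 2) with (1 - cos x ^ 2) by (generalize (sin2_cos2 x); unfold Rsqr; simpl; lra).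
  unfold denom in HD |- *. field. lra. }
rewrite HM, Hkernel.
replace ((1 - damp u) ^ 2) with (denom u - c ^ 2 * damp u) by (rewrite denom_eq; ring).
field. lra.
Qed.

Lemma kernel_sq_lt_M_integrand_sq u : 0 < u ->
  kernel cos u ^ 2 + kernel sin u ^ 2 < M_integrand ((mu + / 2) * c) u ^ 2.
Proof.
intros Hu.
assert (Hgap : 0 < (1 - damp u) ^ 2 - (c * u) ^ 2 * damp u)
  by (generalize (sq_mul_exp_neg_lt (c * u) ltac:(nra)); unfold damp; lra).
assert (0 < exp (- (mu * c * u)) ^ 2 * damp u * ((1 - damp u) ^ 2 - (c * u) ^ 2 * damp u)
          / (denom u * (u ^ 2 + 1))).
{ apply Rdiv_lt_0_compat.
  - apply Rmult_lt_0_compat; [| lra].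
    apply Rmult_lt_0_compat; [apply pow_lt, exp_pos | apply damp_pos].
  - apply Rmult_lt_0_compat; [apply denom_pos | generalize (pow2_ge_0 u); lra]. }
generalize (M_integrand_sq_sub_kernel_sq u). lra.
Qed.

Lemma kernel_sq_le_M_integrand_sq u : 0 <= u ->
  kernel cos u ^ 2 + kernel sin u ^ 2 <= M_integrand ((mu + / 2) * c) u ^ 2.
Proof.
intros Hu. destruct (Req_dec u 0) as [-> | Hne].
- generalize (M_integrand_sq_sub_kernel_sq 0).
  unfold damp. rewrite !Rmult_0_r, Ropp_0, exp_0. intros H.
  ring_simplify in H. lra.
- left. apply kernel_sq_lt_M_integrand_sq. lra.
Qed.

End LaplaceRepresentation.

Lemma cos_plus_add_minus a b : cos (a + b) + cos (a - b) = 2 * cos b * cos a.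
Proof. rewrite cos_plus, cos_minus. ring. Qed.

Lemma sin_plus_add_minus a b : sin (a + b) + sin (a - b) = 2 * cos b * sin a.
Proof. rewrite sin_plus, sin_minus. ring. Qed.

Lemma Cmod_L_lt_M x mu : 0 < sin (x / 2) -> -1/2 < mu ->
  Cmod (L x mu) < M ((2 * mu + 1) * sin (x / 2)).
Proof.
intros Hs Hmu.
set (c := 2 * sin (x / 2)).
assert (Hc : 0 < c) by (unfold c; lra).
assert (Hcos : cos x = 1 - c ^ 2 / 2)
  by (unfold c; replace x with (2 * (x / 2)) at 1 by field; rewrite cos_2a_sin; field).
replace ((2 * mu + 1) * sin (x / 2)) with ((mu + / 2) * c) by (unfold c; field).
assert (Ht : 0 < (mu + / 2) * c) by nra.
apply (Cmod_is_RInt_pinfty_lt (kernel x c mu cos) (kernel x c mu sin)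
         (M_integrand ((mu + / 2) * c))).
- apply continuous_kernel; auto.
- apply continuous_kernel; auto.
- apply continuous_M_integrand.
- apply is_RInt_pinfty_kernel; auto using cos_plus_add_minus.
  + intros y. apply Rabs_le, COS_bound.
  + lra.
- apply is_RInt_pinfty_kernel; auto using sin_plus_add_minus.
  + intros y. apply Rabs_le, SIN_bound.
  + lra.
- apply is_RInt_pinfty_M; auto.
- intros u _. left. apply M_integrand_pos.
- apply kernel_sq_le_M_integrand_sq; auto.
- apply kernel_sq_lt_M_integrand_sq; auto.
Qed.

Lemma Cmod_cexpi a : Cmod (cexpi a) = 1.
Proof.
unfold Cmod, cexpi. simpl fst. simpl snd.
replace (cos a ^ 2 + sin a ^ 2) with 1 by (generalize (sin2_cos2 a); unfold Rsqr; simpl; lra).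
apply sqrt_1.
Qed.

Lemma Cmod_LL x lam : Cmod (LL x lam) = Cmod (L (2 * x) ((lam - 1) / 2)).
Proof. unfold LL. rewrite Cmod_mult, Cmod_cexpi. ring. Qed.

Theorem theorem3 (x : R) (hx0 : 0 < x) (hxpi : x < PI) :
  (* (a), first form *)
  (forall mu : R, -1/2 < mu ->
     Cmod (L x mu) < M ((2 * mu + 1) * sin (x / 2))) /\
  (* (a), equivalent second form *)
  (forall lam : R, 0 < lam ->
     Cmod (LL x lam) < M (lam * sin x)) /\
  (* (b) *)
  (forall lam : R, 0 < lam -> Rbar_lt t0 (lam * sin x) ->
     Cmod (LL x lam) < arccot (lam * sin x)) /\
  (* (c) *)
  (forall mu : R, -1/2 < mu -> (2 * mu + 1) * sin (x / 2) < 1 ->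
     Cmod (L x mu) < ln (1 / ((2 * mu + 1) * sin (x / 2))) + ln (1 + sqrt 2)).
Proof.
assert (Hsin_half : 0 < sin (x / 2)) by (apply sin_gt_0; lra).
assert (Hsin : 0 < sin x) by (apply sin_gt_0; lra).
assert (Ha : forall mu, -1/2 < mu -> Cmod (L x mu) < M ((2 * mu + 1) * sin (x / 2)))
  by (intros; apply Cmod_L_lt_M; auto).
assert (Ha' : forall lam, 0 < lam -> Cmod (LL x lam) < M (lam * sin x)).
{ intros lam Hlam. rewrite Cmod_LL.
  replace (lam * sin x) with ((2 * ((lam - 1) / 2) + 1) * sin (2 * x / 2))
    by (replace (2 * x / 2) with x by field; field).
  apply Cmod_L_lt_M; [replace (2 * x / 2) with x by field; auto | lra]. }
split; [exact Ha |]. split; [exact Ha' |]. split.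
- intros lam Hlam Ht0. apply Rlt_trans with (M (lam * sin x)); auto.
  apply M_lt_arccot. exact Ht0.
- intros mu Hmu Hlt1. apply Rlt_le_trans with (M ((2 * mu + 1) * sin (x / 2))); auto.
  apply M_le_ln. split; [nra | lra].
Qed.
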